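(* Assume $\sup_n\|D_n\|<\infty$. Let $z=x+iy$ with $x\in\mathbb{R}$, $y>0$, let $(F_n(z))_{n\ge0}$ be the Jost solution at $z$, and let $\phi_n=\phi_n(x)$, $\psi_n=\psi_n(x)$ be the Dirichlet and Neumann solutions at the real energy $x$. Then for every $n\ge1$, $$F_n(z)=\psi_n-\phi_nM^\phi_+(z)D_0-iy\,\psi_n\sum_{k=1}^nD_0^{-1}\phi_k^{t}F_k(z)+iy\,\phi_n\sum_{k=1}^nD_0^{-1}\psi_k^{t}F_k(z),$$ and $F_0(z)=\mathbb{I}$.
   Context: Fix $l\in\mathbb{N}$. Let $(D_n)_{n\in\mathbb{Z}}$, $(V_n)_{n\in\mathbb{Z}}$ be sequences of real symmetric $l\times l$ matrices with every $D_n$ invertible. For $z\in\mathbb{C}$ the eigenvalue equation is $D_{n-1}\mathbf{u}_{n-1}+D_n\mathbf{u}_{n+1}+V_n\mathbf{u}_n=z\mathbf{u}_n$; a sequence of $l\times l$ matrices is a (matrix) solution if each column is a solution. The Dirichlet solution $\phi(z)$ and Neumann solution $\psi(z)$ are the matrix solutions for $n\ge1$ with $\phi_0=0,\ \phi_1=\mathbb{I}$ and $\psi_0=\mathbb{I},\ \psi_1=0$. Jost solution and Weyl function: when $\sup_n\|D_n\|<\infty$, for each $z\in\mathbb{C}\setminus\mathbb{R}$ there is a unique sequence $(F_n(z))_{n\ge0}$ of $l\times l$ matrices with $D_nF_{n+1}+D_{n-1}F_{n-1}+V_nF_n=zF_n$ for all $n\ge1$, $F_0=\mathbb{I}$, and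 $\sum_{n\ge0}\|F_n(z)\|^2<\infty$; the matrix Weyl–Titchmarsh function is $M^\phi_+(z):=-F_1(z)D_0^{-1}$. $A^t$ denotes the transpose. *)

From mathcomp Require Import all_boot all_order all_algebra.
From mathcomp Require Export complex.
Set Implicit Arguments. Unset Strict Implicit. Unset Printing Implicit Defensive.
Import Order.TTheory GRing.Theory Num.Theory.
Local Open Scope ring_scope.

Definition cmx (R : rcfType) (l : nat) (A : 'M[R]_l) : 'M[R[i]]_l :=
  map_mx (fun r => r%:C%C) A.

Definition frob2 (R : rcfType) (l : nat) (A : 'M[R[i]]_l) : R :=
  \sum_(i < l) \sum_(j < l) (complex.Re (A i j) ^+ 2 + complex.Im (A i j) ^+ 2).

Definition is_mx_solution (R : rcfType) (l : nat) (D V : int -> 'M[R]_l)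
  (z : R[i]) (u : nat -> 'M[R[i]]_l) : Prop :=
  forall n : nat, (1 <= n)%N ->
    cmx (D (n.-1)%:Z) *m u n.-1 + cmx (D n%:Z) *m u n.+1 + cmx (V n%:Z) *m u n
    = z *: u n.

Definition is_dirichlet (R : rcfType) (l : nat) (D V : int -> 'M[R]_l)
  (z : R[i]) (phi : nat -> 'M[R[i]]_l) : Prop :=
  [/\ is_mx_solution D V z phi, phi 0%N = 0 & phi 1%N = 1%:M].

Definition is_neumann (R : rcfType) (l : nat) (D V : int -> 'M[R]_l)
  (z : R[i]) (psi : nat -> 'M[R[i]]_l) : Prop :=
  [/\ is_mx_solution D V z psi, psi 0%N = 1%:M & psi 1%N = 0].

Definition is_jost (R : rcfType) (l : nat) (D V : int -> 'M[R]_l)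
  (z : R[i]) (F : nat -> 'M[R[i]]_l) : Prop :=
  [/\ is_mx_solution D V z F, F 0%N = 1%:M &
      exists B : R, forall N : nat, \sum_(n < N) frob2 (F n) <= B].

Definition weylM (R : rcfType) (l : nat) (D : int -> 'M[R]_l)
  (F : nat -> 'M[R[i]]_l) : 'M[R[i]]_l :=
  - (F 1%N *m invmx (cmx (D 0))).

From mathcomp Require Import all_boot all_order all_algebra.
From mathcomp Require Import complex.
Import Order.TTheory GRing.Theory Num.Theory.
Local Open Scope ring_scope.
Set Implicit Arguments. Unset Strict Implicit.

(* Variation-of-constants formula for the Jost solution.
   Write (L u)_n = D_{n-1} u_{n-1} + D_n u_{n+1} + V_n u_n.  Over an arbitrary field,
   with all D_n, V_n symmetric and all D_n invertible, we prove:
   - a matrix solution of L u = x u (n >= 1) vanishes if u_0 = u_1 = 0 (solution_eq0);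
   - the Dirichlet and Neumann solutions phi, psi at energy x satisfy, with A = D_0^{-1},
     psi_n A phi_n^T = phi_n A psi_n^T  and  psi_n A phi_{n+1}^T - phi_n A psi_{n+1}^T
     = D_n^{-1}  (wronskian_identities);
   - hence, for any F, G_n = phi_n S^psi_n - psi_n S^phi_n with
     S^u_n = sum_{k=1}^n A u_k^T F_k solves L G = x G + F (particular_solution);
   - so if L F = (x + c) F and F_0 = 1, then F - psi - phi F_1 - c G solves the
     homogeneous equation with zero initial data: F = psi + phi F_1 + c G
     (variation_of_constants).
   The theorem is the case of the field R[i] and c = iy, since phi_n M^phi_+ D_0
   = - phi_n F_1. *)

Section JacobiOperator.
Variables (K : fieldType) (l : nat) (D V : nat -> 'M[K]_l).

Definition jacobi (u : nat -> 'M[K]_l) (n : nat) : 'M[K]_l :=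
  D n.-1 *m u n.-1 + D n *m u n.+1 + V n *m u n.

Lemma jacobiD (u v : nat -> 'M[K]_l) n :
  jacobi (fun k => u k + v k) n = jacobi u n + jacobi v n.
Proof. by rewrite /jacobi !mulmxDr [RHS]addrACA [in RHS](addrACA (D _ *m _)). Qed.

Lemma jacobiN (u : nat -> 'M[K]_l) n : jacobi (fun k => - u k) n = - jacobi u n.
Proof. by rewrite /jacobi !mulmxN !opprD. Qed.

Lemma jacobiB (u v : nat -> 'M[K]_l) n :
  jacobi (fun k => u k - v k) n = jacobi u n - jacobi v n.
Proof. by rewrite jacobiD jacobiN. Qed.

Lemma jacobiZ (c : K) (u : nat -> 'M[K]_l) n :
  jacobi (fun k => c *: u k) n = c *: jacobi u n.
Proof. by rewrite /jacobi !scalerDr -!scalemxAr. Qed.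

Lemma jacobiMr (u : nat -> 'M[K]_l) (M : 'M[K]_l) n :
  jacobi (fun k => u k *m M) n = jacobi u n *m M.
Proof. by rewrite /jacobi !mulmxDl !mulmxA. Qed.

Lemma jacobi_product (u s : nat -> 'M[K]_l) n :
  jacobi (fun k => u k *m s k) n = jacobi u n *m s n
    + D n *m u n.+1 *m (s n.+1 - s n) + D n.-1 *m u n.-1 *m (s n.-1 - s n).
Proof.
rewrite /jacobi !mulmxBr !mulmxDl !mulmxA.
by rewrite [RHS](AC (3*2*2) ((6*(7*1))*(4*(5*2))*3)) /= !addNr !addr0.
Qed.

Hypothesis D_unit : forall n, D n \in unitmx.

Lemma solution_next (x : K) (u : nat -> 'M[K]_l) n :
  jacobi u n = x *: u n ->
  u n.+1 = invmx (D n) *m ((x%:M - V n) *m u n - D n.-1 *m u n.-1).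
Proof.
move=> sol; suff -> : (x%:M - V n) *m u n - D n.-1 *m u n.-1 = D n *m u n.+1.
  by rewrite mulmxA mulVmx // mul1mx.
by rewrite mulmxBl mul_scalar_mx -sol /jacobi addrK addrAC subrr add0r.
Qed.

Lemma solution_eq0 (x : K) (u : nat -> 'M[K]_l) :
  (forall n, (0 < n)%N -> jacobi u n = x *: u n) -> u 0%N = 0 -> u 1%N = 0 ->
  forall n, u n = 0.
Proof.
move=> sol u0 u1.
suff both : forall n, u n = 0 /\ u n.+1 = 0 by move=> n; case: (both n).
elim=> [|n [un un1]]; first by [].
by split=> //; rewrite (solution_next (sol _ _)) //= un un1 !mulmx0 subrr mulmx0.
Qed.

End JacobiOperator.

Section CrossForm.
Variables (K : fieldType) (l : nat) (A : 'M[K]_l).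

Definition cross (u1 v1 u2 v2 : 'M[K]_l) : 'M[K]_l :=
  u1 *m A *m v2^T - v1 *m A *m u2^T.

Lemma cross_stepl (X T Y u1 v1 u1' v1' u2 v2 : 'M[K]_l) :
  cross (X *m (T *m u1 - Y *m u1')) (X *m (T *m v1 - Y *m v1')) u2 v2
  = X *m (T *m cross u1 v1 u2 v2 - Y *m cross u1' v1' u2 v2).
Proof. by rewrite /cross !mulmxBr !mulmxBl !mulmxA !opprD addrACA. Qed.

Lemma cross_stepr (X T Y u1 v1 u2 v2 u2' v2' : 'M[K]_l) :
  cross u1 v1 (X *m (T *m u2 - Y *m u2')) (X *m (T *m v2 - Y *m v2'))
  = (cross u1 v1 u2 v2 *m T^T - cross u1 v1 u2' v2' *m Y^T) *m X^T.
Proof.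
rewrite /cross !trmx_mul !linearB /= !trmx_mul !mulmxBl !mulmxBr !mulmxA.
by rewrite !opprD addrACA.
Qed.

Lemma cross_tr (u1 v1 u2 v2 : 'M[K]_l) : A^T = A ->
  (cross u1 v1 u2 v2)^T = - cross u2 v2 u1 v1.
Proof. by move=> symA; rewrite /cross linearB /= !trmx_mul !trmxK symA !mulmxA opprB. Qed.

End CrossForm.

Section VariationOfConstants.
Variables (K : fieldType) (l : nat) (D V : nat -> 'M[K]_l) (x : K).
Variables (phi psi : nat -> 'M[K]_l).
Hypotheses (D_sym : forall n, (D n)^T = D n) (V_sym : forall n, (V n)^T = V n).
Hypothesis D_unit : forall n, D n \in unitmx.
Hypothesis phi_sol : forall n, (0 < n)%N -> jacobi D V phi n = x *: phi n.
Hypothesis psi_sol : forall n, (0 < n)%N -> jacobi D V psi n = x *: psi n.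
Hypotheses (phi0 : phi 0%N = 0) (phi1 : phi 1%N = 1%:M).
Hypotheses (psi0 : psi 0%N = 1%:M) (psi1 : psi 1%N = 0).

Let A := invmx (D 0%N).
Let W (m n : nat) := cross A (psi m) (phi m) (psi n) (phi n).

(* The Wronskian identities W(n,n) = 0 and W(n,n+1) = D_n^{-1}, by induction on n:
   the recurrence expresses W(n+1, n+2) and W(n+2, n+2) through W at lower sites. *)
Lemma wronskian_identities n :
  [/\ W n n = 0, W n n.+1 = invmx (D n) & W n.+1 n.+1 = 0].
Proof.
have symA : A^T = A by rewrite /A trmx_inv D_sym.
have symT m : (x%:M - V m)^T = x%:M - V m by rewrite linearB /= tr_scalar_mx V_sym.
have step u m : (forall k, (0 < k)%N -> jacobi D V u k = x *: u k) ->
    u m.+2 = invmx (D m.+1) *m ((x%:M - V m.+1) *m u m.+1 - D m *m u m).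
  by move=> sol; apply: (solution_next D_unit); apply: sol.
elim: n => [|n [Wnn Wnn1 Wn1n1]].
  rewrite /W /cross phi0 phi1 psi0 psi1 !trmx0 !trmx1.
  by rewrite !mulmx0 !mul0mx !mulmx1 !mul1mx subrr subr0.
have Wn1n : W n.+1 n = - invmx (D n).
  by rewrite -[LHS]opprK -cross_tr // -/(W n n.+1) Wnn1 trmx_inv D_sym.
have Wn1n2 : W n.+1 n.+2 = invmx (D n.+1).
  rewrite /W (step _ _ psi_sol) (step _ _ phi_sol) cross_stepr -!/(W _ _) Wn1n1 Wn1n.
  by rewrite mul0mx sub0r !mulNmx opprK trmx_inv !D_sym mulVmx // mul1mx.
have Wnn2 : W n n.+2 = invmx (D n) *m (x%:M - V n.+1) *m invmx (D n.+1).
  rewrite /W (step _ _ psi_sol) (step _ _ phi_sol) cross_stepr -!/(W _ _) Wnn Wnn1.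
  by rewrite mul0mx subr0 symT trmx_inv D_sym.
split=> //.
rewrite /W {1}(step _ _ psi_sol) {1}(step _ _ phi_sol) cross_stepl -!/(W _ _).
by rewrite Wn1n2 Wnn2 !mulmxA mulmxV // mul1mx subrr mulmx0.
Qed.

Variable F : nat -> 'M[K]_l.

Definition psum (u : nat -> 'M[K]_l) (n : nat) : 'M[K]_l :=
  \sum_(1 <= k < n.+1) A *m (u k)^T *m F k.

Lemma psum_succ (u : nat -> 'M[K]_l) n :
  psum u n.+1 - psum u n = A *m (u n.+1)^T *m F n.+1.
Proof. by rewrite /psum big_nat_recr //= addrAC subrr add0r. Qed.

Definition vc_term (n : nat) : 'M[K]_l := phi n *m psum psi n - psi n *m psum phi n.

Lemma particular_solution n : (0 < n)%N ->
  jacobi D V vc_term n = x *: vc_term n + F n.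
Proof.
case: n => [//|m] _.
have [_ Wmm1 _] := wronskian_identities m.
have [_ _ Wm2m2] := wronskian_identities m.+1.
rewrite /vc_term jacobiB !jacobi_product phi_sol // psi_sol //= !psum_succ.
rewrite -!(opprB (psum _ m.+1)) !psum_succ.
transitivity (x *: vc_term m.+1 - D m.+1 *m W m.+2 m.+2 *m F m.+2
                                + D m *m W m m.+1 *m F m.+1); last first.
  by rewrite Wm2m2 Wmm1 mulmx0 mul0mx subr0 mulmxV // mul1mx.
rewrite /vc_term /W /cross !mulmxN !mulmxBr !mulmxBl !mulmxA scalerBr !scalemxAl.
by rewrite !opprD !opprK [LHS](AC (3*3) ((1*4)*(5*2)*(6*3))).
Qed.

(* Variation of constants: a solution of L F = (x + c) F with F_0 = 1 is
   F = psi + phi F_1 + c G, since the difference solves the homogeneous equation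
   L u = x u and vanishes at n = 0 and n = 1. *)
Lemma variation_of_constants (c : K) :
  (forall n, (0 < n)%N -> jacobi D V F n = (x + c) *: F n) -> F 0%N = 1%:M ->
  forall n, F n = psi n + phi n *m F 1%N + c *: vc_term n.
Proof.
move=> F_sol F0 n; apply/eqP; rewrite -subr_eq0; apply/eqP.
pose H k := F k - (psi k + phi k *m F 1%N + c *: vc_term k).
apply: (@solution_eq0 _ _ D V D_unit x H) => {n} [n n_gt0||].
- rewrite /H jacobiB !jacobiD jacobiMr jacobiZ particular_solution //.
  rewrite F_sol // phi_sol // psi_sol //; move: (vc_term n) => G.
  rewrite scalerDl !scalerDr -scalemxAl scalerA mulrC -scalerA.
  by rewrite scalerN !scalerDr [in LHS]addrA opprD addrACA subrr addr0.
- rewrite /H /vc_term /psum big_geq // big_geq // F0 phi0 psi0 !mulmx0 subrr.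
  by rewrite scaler0 mul0mx !addr0 subrr.
- rewrite /H /vc_term /psum big_nat1 phi1 psi1 trmx0 mulmx0 !mul0mx mul1mx.
  by rewrite mulmx0 subrr scaler0 addr0 add0r subrr.
Qed.

End VariationOfConstants.

Lemma cmx_tr (R : rcfType) (l : nat) (M : 'M[R]_l) : (cmx M)^T = cmx M^T.
Proof. exact: map_trmx. Qed.

Lemma cmx_unit (R : rcfType) (l : nat) (M : 'M[R]_l) : M \in unitmx -> cmx M \in unitmx.
Proof. by move=> unitM; rewrite map_unitmx. Qed.

Lemma weylM_mulD0 (R : rcfType) (l : nat) (D : int -> 'M[R]_l) (F : nat -> 'M[R[i]]_l) :
  D 0 \in unitmx -> weylM D F *m cmx (D 0) = - F 1%N.
Proof. by move=> unitD0; rewrite /weylM mulNmx -mulmxA mulVmx ?cmx_unit // mulmx1. Qed.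

Theorem mainTheorem4 (R : rcfType) (l : nat) (D V : int -> 'M[R]_l)
  (HDsym : forall n, (D n)^T = D n) (HVsym : forall n, (V n)^T = V n)
  (HDinv : forall n, D n \in unitmx)
  (HDbd : exists B : R, forall n : int, \sum_(i < l) \sum_(j < l) (D n i j) ^+ 2 <= B)
  (x y : R) (hy : 0 < y)
  (F phi psi : nat -> 'M[R[i]]_l)
  (HF : is_jost D V (x +i* y)%C F)
  (Hphi : is_dirichlet D V (x%:C)%C phi)
  (Hpsi : is_neumann D V (x%:C)%C psi) :
  F 0%N = 1%:M /\
  forall n : nat, (1 <= n)%N ->
    F n = psi n - phi n *m weylM D F *m cmx (D 0)
          - (0 +i* y)%C *: (psi n *m \sum_(1 <= k < n.+1)
                                 invmx (cmx (D 0)) *m (phi k)^T *m F k)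
          + (0 +i* y)%C *: (phi n *m \sum_(1 <= k < n.+1)
                                 invmx (cmx (D 0)) *m (psi k)^T *m F k).
Proof.
case: HF => [F_sol F0 _]; case: Hphi => [phi_sol phi0 phi1].
case: Hpsi => [psi_sol psi0 psi1]; split=> // n _.
pose Dc k := cmx (D k%:Z); pose Vc k := cmx (V k%:Z).
have Dc_sym k : (Dc k)^T = Dc k by rewrite cmx_tr HDsym.
have Vc_sym k : (Vc k)^T = Vc k by rewrite cmx_tr HVsym.
have Dc_unit k : Dc k \in unitmx by apply: cmx_unit.
have F_sol_split k : (0 < k)%N -> jacobi Dc Vc F k = (x%:C + (0 +i* y))%C *: F k.
  have -> : (x%:C + (0 +i* y))%C = (x +i* y)%C.
    by apply/eqP; rewrite eq_complex /= addr0 add0r !eqxx.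
  exact: F_sol.
transitivity (psi n + phi n *m F 1%N + (0 +i* y)%C *: vc_term Dc phi psi F n).
  exact: (@variation_of_constants _ _ Dc Vc (x%:C)%C phi psi Dc_sym Vc_sym Dc_unit
    phi_sol psi_sol phi0 phi1 psi0 psi1 F _ F_sol_split F0 n).
have Dc0 : Dc 0%N = cmx (D 0) by [].
rewrite -(mulmxA (phi n)) (weylM_mulD0 F (HDinv 0)) mulmxN opprK.
by rewrite /vc_term /psum Dc0 scalerBr (addrC (_ *: _)) addrA.
Qed.
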